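(* Let $(\mathcal G,p)$ be a CPS on the finite set $\Omega$ with $\mathcal G$ closed under unions and nonempty intersections and covering $\Omega$. Let $G\in\mathcal G$, let $\mu_1,\dots,\mu_K$ be the distinct $\mathcal G$-atoms contained in $G$, let $E$ be an event and $q\in[0,1]$. If $p_{\mu_j}(E)=q$ for all $j=1,\dots,K$, then $p_G(E)=q$.
   Context: A CPS is a pair $(\mathcal G,p)$ where $\mathcal G$ is a family of nonempty subsets of $\Omega$ and $p$ assigns to each $G\in\mathcal G$ a probability measure $p_G$ on $\Omega$ with $p_G(G)=1$ and $p_G(E)=p_G(F)p_F(E)$ whenever $E\subseteq F\subseteq G$, $F,G\in\mathcal G$. The $\mathcal G$-atoms are the sets $m(\omega)=\bigcap\{H\in\mathcal G:\omega\in H\}$ for $\omega\in\Omega$; each belongs to $\mathcal G$. *)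

(* A probability measure on Omega is represented by its mass
   function {ffun Omega -> R} (nonnegative, total mass 1); its value on an
   event E is the sum of masses over E. *)
From mathcomp Require Import all_boot all_order all_algebra.
Set Implicit Arguments. Unset Strict Implicit. Unset Printing Implicit Defensive.
Import Order.TTheory GRing.Theory Num.Theory.
Local Open Scope ring_scope.

Definition prob {R : realFieldType} {Omega : finType}
  (f : {ffun Omega -> R}) (E : {set Omega}) : R := \sum_(w in E) f w.

Definition is_prob {R : realFieldType} {Omega : finType} (f : {ffun Omega -> R}) : Prop :=
  (forall w, 0 <= f w) /\ \sum_w f w = 1.

Definition CPS {R : realFieldType} {Omega : finType}
  (Gfam : {set {set Omega}}) (p : {set Omega} -> {ffun Omega -> R}) : Prop :=
  (forall G, G \in Gfam -> G != set0) /\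
  (forall G, G \in Gfam -> is_prob (p G)) /\
  (forall G, G \in Gfam -> prob (p G) G = 1) /\
  (forall E F G : {set Omega}, F \in Gfam -> G \in Gfam ->
     E \subset F -> F \subset G ->
     prob (p G) E = prob (p G) F * prob (p F) E).

Definition atom {Omega : finType} (Gfam : {set {set Omega}}) (w : Omega) : {set Omega} :=
  \bigcap_(H in Gfam | w \in H) H.

From mathcomp Require Import all_boot all_order all_algebra.

Set Implicit Arguments.
Unset Strict Implicit.
Unset Printing Implicit Defensive.
Import Order.TTheory GRing.Theory Num.Theory.
Local Open Scope ring_scope.

(* The signed mass [g w = p_G(w) ([w \in E] - q)] has total [p_G(E) - q] on [G], and
   total [p_G(A) (p_A(E) - q) = 0] on every atom [A] inside [G] by the chain rule.
   Atoms need not be disjoint, but a member [X] of the family is the union of the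
   atoms of its points; adding them one at a time, inclusion-exclusion only involves
   members of the family strictly inside [X], so by induction on [#|X|] a signed mass
   vanishing on these atoms vanishes on [X]. *)

Section Prob.
Variables (R : realFieldType) (Omega : finType).
Implicit Types (f : {ffun Omega -> R}) (A B E : {set Omega}).

Lemma prob0 f : prob f set0 = 0.
Proof. by rewrite /prob big_set0. Qed.

Lemma probUI f A B : prob f (A :|: B) + prob f (A :&: B) = prob f A + prob f B.
Proof.
rewrite /prob (big_setID (A := A :|: B) B) (big_setID (A := A) B) /=.
rewrite [(A :|: B) :&: B]setIC setKU setDUl setDv setU0.
by rewrite [LHS]addrC [X in _ + X = _]addrC addrA.
Qed.

Lemma prob_setI_eq1 f A E : is_prob f -> prob f A = 1 -> prob f (A :&: E) = prob f E.
Proof.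
move=> [f_ge0 f_sum1] fA1.
have f_out w : w \notin A -> f w = 0.
  apply: (psumr_eq0P (P := fun w => w \notin A)) => [v _|]; first exact: f_ge0.
  by move: f_sum1; rewrite (bigID (mem A)) /= -[X in X + _]/(prob f A) fA1 -{2}(addr0 1) => /addrI.
rewrite /prob [RHS](big_setID A) /= setIC.
suff -> : \sum_(w in E :\: A) f w = 0 by rewrite addr0.
by apply: big1 => w; rewrite inE => /andP[/f_out].
Qed.

Lemma prob_indicator_shift f E q A :
  prob [ffun w => f w * ((w \in E)%:R - q)] A = prob f (A :&: E) - q * prob f A.
Proof.
have -> : prob f (A :&: E) = \sum_(w in A) f w * (w \in E)%:R.
  rewrite /prob (eq_bigl (fun w => (w \in A) && (w \in E))) => [|w]; last by rewrite inE.
  by rewrite big_mkcondr; apply: eq_bigr => w _; case: (w \in E); rewrite ?mulr1 ?mulr0.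
rewrite /prob mulr_sumr -sumrB; apply: eq_bigr => w _.
by rewrite ffunE mulrBr [q * _]mulrC.
Qed.

End Prob.

Section Atoms.
Variables (R : realFieldType) (Omega : finType) (Gfam : {set {set Omega}}).
Hypothesis Gfam_setU : forall H1 H2, H1 \in Gfam -> H2 \in Gfam -> H1 :|: H2 \in Gfam.
Hypothesis Gfam_setI : forall H1 H2, H1 \in Gfam -> H2 \in Gfam -> H1 :&: H2 != set0 ->
  H1 :&: H2 \in Gfam.
Hypothesis Gfam_cover : forall w : Omega, exists2 H, H \in Gfam & w \in H.

Lemma mem_atom w : w \in atom Gfam w.
Proof. by apply/bigcapP => H /andP[]. Qed.

Lemma atom_min w H : H \in Gfam -> w \in H -> atom Gfam w \subset H.
Proof. by move=> HG wH; apply: bigcap_inf; rewrite HG wH. Qed.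

Lemma atom_in w : atom Gfam w \in Gfam.
Proof.
have [H0 H0G wH0] := Gfam_cover w.
(* Working inside [H0] avoids the junk value [setT] of an empty intersection. *)
rewrite -(setIidPr (atom_min H0G wH0)).
have : w \in H0 :&: atom Gfam w by rewrite inE wH0 mem_atom.
rewrite /atom.
elim/big_ind: _ => [|X Y IHX IHY|H /andP[HG wH]]; rewrite ?setIT // => wXY.
- have -> : H0 :&: (X :&: Y) = (H0 :&: X) :&: (H0 :&: Y) by rewrite setIACA setIid.
  have wX : w \in H0 :&: X by move: wXY; rewrite !inE => /and3P[-> ->].
  have wY : w \in H0 :&: Y by move: wXY; rewrite !inE => /and3P[-> _ ->].
  by apply: Gfam_setI; rewrite ?IHX ?IHY //; apply/set0Pn; exists w; rewrite inE wX wY.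
- by apply: Gfam_setI => //; apply/set0Pn; exists w.
Qed.

Lemma bigcup_seq_in (I : eqType) (s : seq I) (F : I -> {set Omega}) :
  (forall i, i \in s -> F i \in Gfam) -> s != [::] -> \bigcup_(i <- s) F i \in Gfam.
Proof.
case: s => // i s + _; elim: s i => [|j s IH] i Fs; first by rewrite big_seq1 Fs ?mem_head.
rewrite big_cons Gfam_setU ?Fs ?mem_head // IH // => k ks.
by apply: Fs; rewrite inE ks orbT.
Qed.

Variable g : {ffun Omega -> R}.

Lemma prob_bigcup_eq0 (I : eqType) (s : seq I) (F : I -> {set Omega}) :
  (forall i, i \in s -> F i \in Gfam) ->
  (forall i Y, i \in s -> Y \in Gfam -> Y \subset F i -> prob g Y = 0) ->
  prob g (\bigcup_(i <- s) F i) = 0.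
Proof.
elim: s => [|i s IH] Fs g0; first by rewrite big_nil prob0.
have Fs' j : j \in s -> F j \in Gfam by move=> js; rewrite Fs // inE js orbT.
set B := \bigcup_(j <- s) F j.
have gB0 : prob g B = 0 by apply: IH => // j Y js; apply: g0; rewrite inE js orbT.
have gAB0 : prob g (F i :&: B) = 0.
  have [->|AB0] := eqVneq (F i :&: B) set0; first exact: prob0.
  have sn0 : s != [::] by apply: contra_neq AB0 => s0; rewrite /B s0 big_nil setI0.
  apply: (g0 i) (subsetIl _ _); rewrite ?mem_head //.
  by rewrite Gfam_setI ?Fs ?mem_head ?bigcup_seq_in.
rewrite big_cons -/B -(addr0 (prob g _)) -[X in _ + X]gAB0 probUI gB0 addr0.
by apply: (g0 i); rewrite ?Fs ?mem_head.
Qed.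

Lemma prob_eq0_of_atoms X : X \in Gfam ->
  (forall x, x \in X -> prob g (atom Gfam x) = 0) -> prob g X = 0.
Proof.
have [n] := ubnP #|X|; elim: n X => // n IH X /ltnSE leXn XG gatom0.
have -> : X = \bigcup_(x <- enum X) atom Gfam x.
  rewrite big_enum; apply/setP => w; apply/idP/bigcupP => [wX|[x xX]].
    by exists w; rewrite ?mem_atom.
  exact/subsetP/atom_min.
apply: prob_bigcup_eq0 => [x _|x Y]; first exact: atom_in.
rewrite mem_enum => xX YG YA.
have [->|YneA] := eqVneq Y (atom Gfam x); first exact: gatom0.
have YX : Y \proper X.
  by apply: (proper_sub_trans _ (atom_min XG xX)); rewrite properEneq YneA.
apply: IH (leq_trans (proper_card YX) leXn) YG _ => y yY.
by apply: gatom0; apply: (subsetP (proper_sub YX)).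
Qed.

End Atoms.

Theorem lemma6 (R : realFieldType) (Omega : finType)
  (Gfam : {set {set Omega}}) (p : {set Omega} -> {ffun Omega -> R}) :
  CPS Gfam p ->
  (forall H1 H2, H1 \in Gfam -> H2 \in Gfam -> H1 :|: H2 \in Gfam) ->
  (forall H1 H2, H1 \in Gfam -> H2 \in Gfam -> H1 :&: H2 != set0 ->
     H1 :&: H2 \in Gfam) ->
  (forall w : Omega, exists2 H, H \in Gfam & w \in H) ->
  forall (G : {set Omega}) (E : {set Omega}) (q : R),
  G \in Gfam -> 0 <= q <= 1 ->
  (forall w : Omega, atom Gfam w \subset G -> prob (p (atom Gfam w)) E = q) ->
  prob (p G) E = q.
Proof.
move=> [_ [p_prob [p_full p_chain]]] GU GI Gcover G E q GG _ atomE.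
set g := [ffun w => p G w * ((w \in E)%:R - q)].
have g_atom0 w : w \in G -> prob g (atom Gfam w) = 0.
  move=> wG; have AG := atom_min GG wG; have A_in := atom_in GI Gcover w.
  rewrite prob_indicator_shift (p_chain _ _ _ A_in GG (subsetIl _ _) AG).
  by rewrite (prob_setI_eq1 _ (p_prob _ A_in) (p_full _ A_in)) atomE // mulrC subrr.
have := prob_eq0_of_atoms GU GI Gcover GG g_atom0.
rewrite prob_indicator_shift (prob_setI_eq1 _ (p_prob _ GG) (p_full _ GG)) p_full //.
by rewrite mulr1 => /subr0_eq.
Qed.
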